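(* Assume the Bellman setting below, hypotheses (H1) and (H2), and that $A(P)$ is monotone for every $P\in\mathcal P$. Let $(U^\ell)_{\ell\ge 0}$ be any sequence produced by $\epsilon$-policy iteration on $\mathcal P$ (defined below). Then $(U^\ell)_\ell$ converges to a solution of the Bellman problem $\sup_{P\in\mathcal P}\{-A(P)U+y(P)\}=0$, and this solution is unique.
   Context: Bellman setting: Let $M\ge 0$ be an integer and $\mathcal P=\mathcal P_0\times\cdots\times\mathcal P_M$ a product of nonempty sets; write $P=(P_0,\dots,P_M)\in\mathcal P$. Let $A:\mathcal P\to\mathbb R^{(M+1)\times(M+1)}$ and $y:\mathcal P\to\mathbb R^{M+1}$ be row-decoupled: for each $i$, the $i$-th row of $A(P)$ and the $i$-th entry of $y(P)$ depend only on $P_i$. Inequalities between vectors (or matrices) are entrywise, and the supremum of a family of vectors is taken entrywise. The Bellman problem is to find $U\in\mathbb R^{M+1}$ with $\sup_{P\in\mathcal P}\{-A(P)U+y(P)\}=0$. Let $\vec e=(1,\dots,1)^\top\in\mathbb R^{M+1}$. A real square matrix is monotone if it is nonsingular and its inverse has nonnegative entries. (H1): the map $P\mapsto A(P)^{-1}$ is bounded on $\{P\in\mathcal P: A(P)\text{ nonsingular}\}$. (H2): $A$ and $y$ are bounded functions. $\epsilon$-policy iteration on a set $\mathcal Q=\mathcal Q_0\times\cdots\times\mathcal Q_M$ (with $\emptyset\ne\mathcal Q_i\subseteq\mathcal P_i$): pick any $U^0\in\mathbb R^{M+1}$ and any sequence $(\epsilon^\ell)_{\ell\ge1}$ of positive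 numbers with $\sum_\ell\epsilon^\ell<\infty$; for $\ell=1,2,\dots$ pick $P^\ell\in\mathcal Q$ with $-A(P^\ell)U^{\ell-1}+y(P^\ell)+\epsilon^\ell\vec e\ge\sup_{P\in\mathcal Q}\{-A(P)U^{\ell-1}+y(P)\}$ and let $U^\ell$ be the solution of $A(P^\ell)U^\ell=y(P^\ell)$. *)

From Stdlib Require Import Reals Lra.
Open Scope R_scope.

(* Indices are natural numbers 0..M; vectors are nat -> R, matrices nat -> nat -> R,
   only the entries with indices <= M matter. *)
Definition vec := nat -> R.
Definition mat := nat -> nat -> R.

Definition matvec (M : nat) (A : mat) (U : vec) : vec :=
  fun i => sum_f_R0 (fun j => A i j * U j) M.

Definition matmul (M : nat) (A B : mat) : mat :=
  fun i k => sum_f_R0 (fun j => A i j * B j k) M.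

Definition idm : mat := fun i j => if Nat.eqb i j then 1 else 0.

Definition is_inverse (M : nat) (A B : mat) : Prop :=
  forall i k, (i <= M)%nat -> (k <= M)%nat ->
    matmul M A B i k = idm i k /\ matmul M B A i k = idm i k.

Definition nonsingular (M : nat) (A : mat) : Prop := exists B, is_inverse M A B.

Definition monotone (M : nat) (A : mat) : Prop :=
  exists B, is_inverse M A B /\
    forall i j, (i <= M)%nat -> (j <= M)%nat -> 0 <= B i j.

(* A control P = (P_0,...,P_M) with P_i : T i; P \in 𝒫 iff P_i \in S i for all i <= M. *)
Definition in_set (M : nat) (T : nat -> Type) (S : forall i, T i -> Prop)
  (P : forall i, T i) : Prop := forall i, (i <= M)%nat -> S i (P i).

(* Row-decoupling is built in: row i of A(P) is a i (P i), entry i of y(P) is y i (P i). *)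
Definition Amat (T : nat -> Type) (a : forall i, T i -> nat -> R)
  (P : forall i, T i) : mat := fun i j => a i (P i) j.

Definition yvec (T : nat -> Type) (y : forall i, T i -> R)
  (P : forall i, T i) : vec := fun i => y i (P i).

Definition resid (M : nat) (T : nat -> Type) (a : forall i, T i -> nat -> R)
  (y : forall i, T i -> R) (P : forall i, T i) (U : vec) : vec :=
  fun i => - matvec M (Amat T a P) U i + yvec T y P i.

Definition bellman_sol (M : nat) (T : nat -> Type) (S : forall i, T i -> Prop)
  (a : forall i, T i -> nat -> R) (y : forall i, T i -> R) (U : vec) : Prop :=
  forall i, (i <= M)%nat ->
    is_lub (fun r => exists P, in_set M T S P /\ r = resid M T a y P U i) 0.

Definition H1 (M : nat) (T : nat -> Type) (S : forall i, T i -> Prop)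
  (a : forall i, T i -> nat -> R) : Prop :=
  exists C, forall P B, in_set M T S P -> is_inverse M (Amat T a P) B ->
    forall i j, (i <= M)%nat -> (j <= M)%nat -> Rabs (B i j) <= C.

Definition H2 (M : nat) (T : nat -> Type) (S : forall i, T i -> Prop)
  (a : forall i, T i -> nat -> R) (y : forall i, T i -> R) : Prop :=
  exists C, forall P, in_set M T S P ->
    forall i, (i <= M)%nat ->
      Rabs (y i (P i)) <= C /\ forall j, (j <= M)%nat -> Rabs (a i (P i) j) <= C.

(* (U, Pol, eps) is a run of eps-policy iteration on 𝒫:
   eps l > 0 for l >= 1, sum_{l>=1} eps l < oo, and for l >= 1
   Pol l \in 𝒫, -A(Pol l)U^{l-1} + y(Pol l) + eps l e >= sup_{P in 𝒫}{-A(P)U^{l-1}+y(P)}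
   (written out: it is an entrywise upper bound of every member of the family),
   and A(Pol l) U^l = y(Pol l). *)
Definition eps_policy_iteration (M : nat) (T : nat -> Type) (S : forall i, T i -> Prop)
  (a : forall i, T i -> nat -> R) (y : forall i, T i -> R)
  (U : nat -> vec) (Pol : nat -> forall i, T i) (eps : nat -> R) : Prop :=
  (forall l, (1 <= l)%nat -> 0 < eps l) /\
  (exists s, Un_cv (fun n => sum_f_R0 (fun k => eps (Datatypes.S k)) n) s) /\
  (forall l, (1 <= l)%nat ->
     in_set M T S (Pol l) /\
     (forall P, in_set M T S P -> forall i, (i <= M)%nat ->
        resid M T a y P (U (l - 1)%nat) i
          <= resid M T a y (Pol l) (U (l - 1)%nat) i + eps l) /\
     (forall i, (i <= M)%nat ->
        matvec M (Amat T a (Pol l)) (U l) i = yvec T y (Pol l) i)).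

From Pilot Require Import Defs.
From Stdlib Require Import Reals Lra Lia Classical ClassicalEpsilon.
Open Scope R_scope.

(* A monotone A(P) whose inverse is bounded by C turns bounds on A(P) x into bounds on x,
   with constant (M+1) C.  For consecutive iterates this gives U^l - U^(l+1) <= (M+1) C eps_(l+1),
   so U^l plus the partial sums of (M+1) C eps is nondecreasing and bounded above, hence
   convergent.  Boundedness of A makes the residual Lipschitz uniformly in the policy, which
   carries the near-optimality of the policies P^l to the limit.  Uniqueness is a comparison
   principle: row decoupling lets one glue row-wise near-optimal controls for a solution W into
   a single policy P, and then A(P)(V - W) >= -delta for every other solution V. *)

Lemma sum_f_R0_idm_l (f : nat -> R) (i N : nat) :
  (i <= N)%nat -> sum_f_R0 (fun k => idm i k * f k) N = f i.
Proof.
  induction N as [|N IHN]; intro Hi.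
  - replace i with 0%nat by lia. simpl. unfold idm. simpl. ring.
  - rewrite tech5. unfold idm at 2.
    destruct (Nat.eqb_spec i (S N)) as [->|Hne].
    + rewrite (sum_eq _ (fun _ => 0)), sum_cte; [ring |].
      intros k Hk. unfold idm. destruct (Nat.eqb_spec (S N) k); [lia | ring].
    + rewrite IHN by lia. ring.
Qed.

Lemma sum_f_R0_swap (f : nat -> nat -> R) (N N' : nat) :
  sum_f_R0 (fun j => sum_f_R0 (fun k => f j k) N) N' =
  sum_f_R0 (fun k => sum_f_R0 (fun j => f j k) N') N.
Proof.
  induction N' as [|N' IHN']; simpl.
  - reflexivity.
  - rewrite IHN', <- plus_sum. reflexivity.
Qed.

Lemma matvec_inverse_l (M : nat) (A B : mat) (x : vec) (i : nat) :
  is_inverse M A B -> (i <= M)%nat -> matvec M B (matvec M A x) i = x i.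
Proof.
  intros HAB Hi. unfold matvec.
  transitivity (sum_f_R0 (fun j => sum_f_R0 (fun k => B i j * A j k * x k) M) M).
  { apply sum_eq; intros j _. rewrite scal_sum. apply sum_eq; intros; ring. }
  rewrite sum_f_R0_swap, <- (sum_f_R0_idm_l x i M Hi).
  apply sum_eq; intros k Hk. destruct (HAB i k Hi Hk) as [_ <-].
  unfold matmul. rewrite Rmult_comm, scal_sum. apply sum_eq; intros; ring.
Qed.

Lemma matvec_sub (M : nat) (A : mat) (x z : vec) (i : nat) :
  matvec M A (fun j => x j - z j) i = matvec M A x i - matvec M A z i.
Proof. unfold matvec. rewrite <- minus_sum. apply sum_eq; intros; ring. Qed.

Lemma matvec_opp (M : nat) (A : mat) (x : vec) (i : nat) :
  matvec M A (fun j => - x j) i = - matvec M A x i.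
Proof.
  unfold matvec. replace (- _) with (-1 * sum_f_R0 (fun j => A i j * x j) M) by ring.
  rewrite scal_sum. apply sum_eq; intros; ring.
Qed.

Lemma matvec_abs_le (M : nat) (A : mat) (C : R) (x : vec) (i : nat) :
  (forall j, (j <= M)%nat -> Rabs (A i j) <= C) ->
  Rabs (matvec M A x i) <= C * sum_f_R0 (fun j => Rabs (x j)) M.
Proof.
  intro HA. unfold matvec. eapply Rle_trans; [apply sum_f_R0_triangle |].
  rewrite scal_sum. apply sum_Rle; intros j Hj. rewrite Rabs_mult, Rmult_comm.
  apply Rmult_le_compat_l; [apply Rabs_pos | auto].
Qed.

(* x = B (A x) with B entrywise nonnegative. *)
Lemma inverse_nonneg_matvec_le (M : nat) (A B : mat) (C d : R) (x : vec) :
  is_inverse M A B ->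
  (forall i j, (i <= M)%nat -> (j <= M)%nat -> 0 <= B i j <= C) -> 0 <= d ->
  (forall j, (j <= M)%nat -> matvec M A x j <= d) ->
  forall i, (i <= M)%nat -> x i <= d * (INR (S M) * C).
Proof.
  intros HAB HB Hd Hx i Hi. rewrite <- (matvec_inverse_l M A B x i HAB Hi).
  apply Rle_trans with (sum_f_R0 (fun j => B i j * d) M).
  - apply sum_Rle; intros j Hj. apply Rmult_le_compat_l; [apply HB|]; auto.
  - rewrite <- scal_sum. apply Rmult_le_compat_l; [exact Hd |].
    rewrite Rmult_comm, <- sum_cte. apply sum_Rle; intros j Hj. apply HB; auto.
Qed.

Lemma Un_cv_const (c : R) : Un_cv (fun _ => c) c.
Proof.
  intros e He. exists 0%nat. intros n _. unfold R_dist. rewrite Rminus_diag, Rabs_R0. exact He.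
Qed.

Lemma Un_cv_S_iff (u : nat -> R) (l : R) : Un_cv (fun n => u (S n)) l <-> Un_cv u l.
Proof.
  split; intros Hu e He; destruct (Hu e He) as [N HN].
  - exists (S N). intros [|n] Hn; [lia | apply HN; lia].
  - exists N. intros n Hn. apply HN. lia.
Qed.

Lemma series_terms_cv0 (u : nat -> R) (s : R) :
  Un_cv (fun n => sum_f_R0 u n) s -> Un_cv u 0.
Proof.
  intro Hs. apply Un_cv_S_iff.
  replace 0 with (s - s) by ring.
  eapply (Un_cv_ext (fun n => sum_f_R0 u (S n) - sum_f_R0 u n)).
  { intro n. rewrite tech5. ring. }
  apply CV_minus; [apply Un_cv_S_iff|]; exact Hs.
Qed.

(* Adding the partial sums of the summable defects makes the sequence nondecreasing. *)
Lemma almost_growing_cv (u delta : nat -> R) (s K : R) :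
  (forall n, u n - u (S n) <= delta (S n)) -> (forall n, 0 <= delta n) ->
  Un_cv (fun n => sum_f_R0 delta n) s -> (forall n, u n <= K) ->
  exists l, Un_cv u l.
Proof.
  intros Hstep Hdelta Hs HK.
  set (X := fun n => u n + sum_f_R0 delta n).
  assert (Hgrow : Un_growing X).
  { intro n. unfold X. rewrite tech5. specialize (Hstep n). lra. }
  assert (Hsum_le : forall n, sum_f_R0 delta n <= s).
  { intro n. apply sum_incr; assumption. }
  assert (Hbound : has_ub X).
  { exists (K + s). intros r [n ->]. unfold X. specialize (HK n). specialize (Hsum_le n). lra. }
  destruct (growing_cv X Hgrow Hbound) as [L HL].
  exists (L - s). apply (Un_cv_ext (fun n => X n - sum_f_R0 delta n)).
  - intro n. unfold X. ring.
  - apply CV_minus; assumption.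
Qed.

Lemma Rabs_le_between (x b : R) : Rabs x <= b -> - b <= x <= b.
Proof. unfold Rabs. destruct (Rcase_abs x); lra. Qed.

Lemma sum_abs_sub_cv0 (V : nat -> vec) (W : vec) (N : nat) :
  (forall j, (j <= N)%nat -> Un_cv (fun n => V n j) (W j)) ->
  Un_cv (fun n => sum_f_R0 (fun j => Rabs (V n j - W j)) N) 0.
Proof.
  assert (Hterm : forall j, Un_cv (fun n => V n j) (W j) ->
                  Un_cv (fun n => Rabs (V n j - W j)) 0).
  { intros j Hj. rewrite <- Rabs_R0, <- (Rminus_diag (W j)).
    apply cv_cvabs, CV_minus; [exact Hj | apply Un_cv_const]. }
  induction N as [|N IHN]; intro HV; simpl.
  - apply Hterm, HV. lia.
  - rewrite <- (Rplus_0_l 0). apply CV_plus.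
    + apply IHN. intros j Hj. apply HV. lia.
    + apply Hterm, HV. lia.
Qed.

Section Bellman.

Variables (M : nat) (T : nat -> Type) (Pset : forall i, T i -> Prop).
Variables (a : forall i, T i -> nat -> R) (y : forall i, T i -> R) (C1 C2 : R).

Hypothesis inverse_bounded : forall P B, in_set M T Pset P -> is_inverse M (Amat T a P) B ->
  forall i j, (i <= M)%nat -> (j <= M)%nat -> Rabs (B i j) <= C1.
Hypothesis data_bounded : forall P, in_set M T Pset P -> forall i, (i <= M)%nat ->
  Rabs (y i (P i)) <= C2 /\ forall j, (j <= M)%nat -> Rabs (a i (P i) j) <= C2.
Hypothesis policy_monotone : forall P, in_set M T Pset P -> monotone M (Amat T a P).

Local Notation A := (Amat T a).
Local Notation resid := (resid M T a y).
Local Notation admissible := (in_set M T Pset).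
Local Notation kappa := (INR (S M) * C1).

Lemma kappa_nonneg P : admissible P -> 0 <= kappa.
Proof.
  intro HP. destruct (policy_monotone P HP) as [B [HB _]].
  apply Rmult_le_pos; [apply pos_INR |].
  apply Rle_trans with (Rabs (B 0%nat 0%nat)); [apply Rabs_pos |].
  apply (inverse_bounded P B); auto; lia.
Qed.

Lemma policy_matvec_le P d x : admissible P -> 0 <= d ->
  (forall j, (j <= M)%nat -> matvec M (A P) x j <= d) ->
  forall i, (i <= M)%nat -> x i <= d * kappa.
Proof.
  intro HP. destruct (policy_monotone P HP) as [B [HB Hpos]].
  apply (inverse_nonneg_matvec_le M (A P) B); [exact HB |].
  intros i j Hi Hj. split; [auto |].
  apply Rle_trans with (Rabs (B i j)); [apply Rle_abs | eapply inverse_bounded; eauto].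
Qed.

Lemma policy_matvec_ge P d x : admissible P -> 0 <= d ->
  (forall j, (j <= M)%nat -> - d <= matvec M (A P) x j) ->
  forall i, (i <= M)%nat -> - (d * kappa) <= x i.
Proof.
  intros HP Hd Hx i Hi.
  enough (- x i <= d * kappa) by lra.
  apply (policy_matvec_le P d (fun j => - x j)); auto.
  intros j Hj. rewrite matvec_opp. specialize (Hx j Hj). lra.
Qed.

Lemma resid_sub P V W i :
  resid P V i - resid P W i = matvec M (A P) (fun j => W j - V j) i.
Proof. unfold Defs.resid. rewrite matvec_sub. ring. Qed.

Lemma resid_lipschitz P V W i : admissible P -> (i <= M)%nat ->
  Rabs (resid P V i - resid P W i) <= C2 * sum_f_R0 (fun j => Rabs (V j - W j)) M.
Proof.
  intros HP Hi. rewrite resid_sub.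
  eapply Rle_trans; [apply matvec_abs_le, (proj2 (data_bounded P HP i Hi)) |].
  right. f_equal. apply sum_eq; intros. apply Rabs_minus_sym.
Qed.

Lemma lub_approx (E : R -> Prop) (m e : R) :
  is_lub E m -> 0 < e -> exists r, E r /\ m - e < r.
Proof.
  intros [_ Hleast] He. apply NNPP. intro Hnone.
  enough (m <= m - e) by lra.
  apply Hleast. intros r Hr. apply Rnot_lt_le. intro Hlt. apply Hnone. eauto.
Qed.

(* Row decoupling: row k of the residual only sees the control P k, so near-optimal
   controls for the individual rows can be glued into a single admissible policy. *)
Lemma bellman_sol_near_optimal V delta : bellman_sol M T Pset a y V -> 0 < delta ->
  exists P, admissible P /\ forall k, (k <= M)%nat -> - delta < resid P V k.
Proof.
  intros HV Hdelta.
  destruct (lub_approx _ _ _ (HV 0%nat (le_0_n M)) Hdelta) as [_ [[P0 [HP0 _]] _]].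
  assert (Hrow : forall k, exists Q, admissible Q /\ ((k <= M)%nat -> - delta < resid Q V k)).
  { intro k. destruct (Nat.le_gt_cases k M) as [Hk | Hk].
    - destruct (lub_approx _ _ _ (HV k Hk) Hdelta) as [r [[Q [HQ ->]] Hr]].
      exists Q. split; [exact HQ |]. intros _. lra.
    - exists P0. split; [exact HP0 | lia]. }
  destruct (choice _ Hrow) as [Q HQ].
  exists (fun k => Q k k). split.
  - intros k Hk. exact (proj1 (HQ k) k Hk).
  - intros k Hk. exact (proj2 (HQ k) Hk).
Qed.

Lemma bellman_sol_le V W : bellman_sol M T Pset a y V -> bellman_sol M T Pset a y W ->
  forall i, (i <= M)%nat -> W i <= V i.
Proof.
  intros HV HW i Hi. apply Rnot_lt_le. intro Hlt.
  destruct (bellman_sol_near_optimal W 1 HW Rlt_0_1) as [P0 [HP0 _]].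
  pose proof (kappa_nonneg P0 HP0) as Hkappa.
  set (delta := (W i - V i) / (kappa + 1)).
  assert (Hdelta : 0 < delta) by (apply Rdiv_lt_0_compat; lra).
  assert (Hgap : delta * kappa + delta = W i - V i) by (unfold delta; field; lra).
  destruct (bellman_sol_near_optimal W delta HW Hdelta) as [P [HP HPW]].
  enough (- (delta * kappa) <= V i - W i) by lra.
  apply (policy_matvec_ge P delta (fun j => V j - W j)); [exact HP | lra | | exact Hi].
  intros j Hj. rewrite <- resid_sub.
  assert (resid P V j <= 0) by (apply (proj1 (HV j Hj)); eauto).
  specialize (HPW j Hj). lra.
Qed.

Lemma bellman_sol_unique V W : bellman_sol M T Pset a y V -> bellman_sol M T Pset a y W ->
  forall i, (i <= M)%nat -> V i = W i.
Proof. intros HV HW i Hi. apply Rle_antisym; apply bellman_sol_le; assumption. Qed.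

Section PolicyIteration.

Variables (U : nat -> vec) (Pol : nat -> forall i, T i) (eps : nat -> R).
Hypothesis run : eps_policy_iteration M T Pset a y U Pol eps.

Lemma iterate_admissible l : (1 <= l)%nat -> admissible (Pol l).
Proof. intro Hl. exact (proj1 (proj2 (proj2 run) l Hl)). Qed.

Lemma iterate_resid_0 l i : (1 <= l)%nat -> (i <= M)%nat -> resid (Pol l) (U l) i = 0.
Proof.
  intros Hl Hi. unfold Defs.resid.
  rewrite (proj2 (proj2 (proj2 (proj2 run) l Hl)) i Hi). ring.
Qed.

Lemma iterate_near_optimal n P i : admissible P -> (i <= M)%nat ->
  resid P (U (S n)) i <= resid (Pol (S (S n))) (U (S n)) i + eps (S (S n)).
Proof.
  intros HP Hi. exact (proj1 (proj2 (proj2 (proj2 run) (S (S n)) ltac:(lia))) P HP i Hi).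
Qed.

Lemma iterate_le n i : (i <= M)%nat -> U (S n) i <= C2 * kappa.
Proof.
  intro Hi. assert (HP := iterate_admissible (S n) ltac:(lia)).
  apply (policy_matvec_le (Pol (S n))); auto.
  - apply Rle_trans with (Rabs (y 0%nat (Pol (S n) 0%nat))); [apply Rabs_pos |].
    apply (data_bounded _ HP). lia.
  - intros j Hj. rewrite (proj2 (proj2 (proj2 (proj2 run) (S n) ltac:(lia))) j Hj).
    apply Rle_trans with (Rabs (yvec T y (Pol (S n)) j)); [apply Rle_abs |].
    apply (data_bounded _ HP j Hj).
Qed.

(* A(P^{n+2}) (U^{n+1} - U^{n+2}) = - resid P^{n+2} U^{n+1} <= eps_{n+2} - resid P^{n+1} U^{n+1}
   = eps_{n+2}. *)
Lemma iterate_decrease_le n j : (j <= M)%nat ->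
  U (S n) j - U (S (S n)) j <= eps (S (S n)) * kappa.
Proof.
  intro Hj. assert (HP := iterate_admissible (S (S n)) ltac:(lia)).
  apply (policy_matvec_le (Pol (S (S n))) _ (fun j => U (S n) j - U (S (S n)) j)); auto.
  - left. apply (proj1 run). lia.
  - intros k Hk. rewrite <- resid_sub, (iterate_resid_0 (S (S n))) by (auto; lia).
    pose proof (iterate_near_optimal n (Pol (S n)) k (iterate_admissible (S n) ltac:(lia)) Hk)
      as Hopt.
    rewrite iterate_resid_0 in Hopt by (auto; lia). lra.
Qed.

Lemma iterate_cv : exists Ustar : vec,
  forall i, (i <= M)%nat -> Un_cv (fun n => U (S n) i) (Ustar i).
Proof.
  destruct run as [Hpos [[s Hs] _]].
  assert (Hkappa := kappa_nonneg _ (iterate_admissible 1 (le_n 1))).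
  assert (Hcomp : forall i, exists u, (i <= M)%nat -> Un_cv (fun n => U (S n) i) u).
  { intro i. destruct (Nat.le_gt_cases i M) as [Hi | Hi]; [| exists 0; lia].
    destruct (almost_growing_cv (fun n => U (S n) i) (fun n => kappa * eps (S n))
                (kappa * s) (C2 * kappa)) as [u Hu].
    - intro n. rewrite Rmult_comm. apply iterate_decrease_le, Hi.
    - intro n. apply Rmult_le_pos; [exact Hkappa | left; apply Hpos; lia].
    - apply (Un_cv_ext (fun n => kappa * sum_f_R0 (fun k => eps (S k)) n)).
      + intro n. rewrite scal_sum. apply sum_eq; intros; ring.
      + apply CV_mult; [apply Un_cv_const | exact Hs].
    - intro n. apply iterate_le, Hi.
    - exists u. intros _. exact Hu. }
  destruct (choice _ Hcomp) as [Ustar HUstar]. exists Ustar. exact HUstar.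
Qed.

Section Limit.

Variable Ustar : vec.
Hypothesis iterate_limit : forall i, (i <= M)%nat -> Un_cv (fun n => U (S n) i) (Ustar i).

Local Notation D n := (sum_f_R0 (fun j => Rabs (U (S n) j - Ustar j)) M).

Lemma limit_resid_le_0 P i : admissible P -> (i <= M)%nat -> resid P Ustar i <= 0.
Proof.
  intros HP Hi.
  apply Rle_cv_lim with (fun _ => resid P Ustar i)
    (fun n => 2 * C2 * D n + C2 * D (S n) + eps (S (S n))); [| apply Un_cv_const |].
  - intro n. assert (HQ := iterate_admissible (S (S n)) ltac:(lia)).
    pose proof (Rabs_le_between _ _ (resid_lipschitz P (U (S n)) Ustar i HP Hi)).
    pose proof (iterate_near_optimal n P i HP Hi).
    pose proof (Rabs_le_between _ _ (resid_lipschitz _ (U (S n)) Ustar i HQ Hi)).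
    pose proof (Rabs_le_between _ _ (resid_lipschitz _ (U (S (S n))) Ustar i HQ Hi)).
    pose proof (iterate_resid_0 (S (S n)) i ltac:(lia) Hi).
    lra.
  - assert (HD : Un_cv (fun n => D n) 0) by (apply sum_abs_sub_cv0; exact iterate_limit).
    assert (Heps : Un_cv (fun n => eps (S (S n))) 0).
    { destruct run as [_ [[s Hs] _]]. apply (Un_cv_S_iff (fun k => eps (S k))), (series_terms_cv0 _ s Hs). }
    replace 0 with (2 * C2 * 0 + C2 * 0 + 0) by ring.
    apply CV_plus; [apply CV_plus |]; try apply CV_mult; try apply Un_cv_const;
      [exact HD | apply (Un_cv_S_iff (fun n => D n)); exact HD | exact Heps].
Qed.

Lemma limit_bellman_sol : bellman_sol M T Pset a y Ustar.
Proof.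
  intros i Hi. split.
  - intros r [P [HP ->]]. exact (limit_resid_le_0 P i HP Hi).
  - intros b Hb.
    apply Rle_cv_lim with (fun n => - C2 * D n) (fun _ => b); [| | apply Un_cv_const].
    + intro n. assert (HP := iterate_admissible (S n) ltac:(lia)).
      pose proof (Rabs_le_between _ _ (resid_lipschitz _ (U (S n)) Ustar i HP Hi)).
      pose proof (iterate_resid_0 (S n) i ltac:(lia) Hi).
      assert (resid (Pol (S n)) Ustar i <= b) by (apply Hb; eauto).
      lra.
    + replace 0 with (- C2 * 0) by ring.
      apply CV_mult; [apply Un_cv_const | apply sum_abs_sub_cv0; exact iterate_limit].
Qed.

End Limit.

End PolicyIteration.

End Bellman.
Theorem theorem3p2 (M : nat) (T : nat -> Type) (S : forall i, T i -> Prop)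
  (a : forall i, T i -> nat -> R) (y : forall i, T i -> R) :
  (forall i, (i <= M)%nat -> exists p, S i p) ->
  H1 M T S a -> H2 M T S a y ->
  (forall P, in_set M T S P -> monotone M (Amat T a P)) ->
  forall (U : nat -> vec) (Pol : nat -> forall i, T i) (eps : nat -> R),
  eps_policy_iteration M T S a y U Pol eps ->
  exists Ustar : vec,
    (forall i, (i <= M)%nat -> Un_cv (fun l => U l i) (Ustar i)) /\
    bellman_sol M T S a y Ustar /\
    (forall V : vec, bellman_sol M T S a y V ->
       forall i, (i <= M)%nat -> V i = Ustar i).
Proof.
  (* Nonemptiness of the control sets is implied by the run itself. *)
  intros _ [C1 HC1] [C2 HC2] Hmon U Pol eps Hrun.
  destruct (iterate_cv M T S a y C1 C2 HC1 HC2 Hmon U Pol eps Hrun) as [Ustar HUstar].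
  assert (Hsol := limit_bellman_sol M T S a y C2 HC2 U Pol eps Hrun Ustar HUstar).
  exists Ustar. split; [| split; [exact Hsol |]].
  - intros i Hi. apply Un_cv_S_iff, HUstar, Hi.
  - intros V HV. exact (bellman_sol_unique M T S a y C1 HC1 Hmon V Ustar HV Hsol).
Qed.
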